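(* Let $n\ge2$, let $P=(p_{kl})$ be an $n\times n$ checkerboard copula, and let $i,j,i',j'\in\{1,\dots,n-1\}$ with $\eta_{i'j'}\neq0$, where $\eta_{ab}=p_{ab}+p_{a+1,b}+p_{a,b+1}+p_{a+1,b+1}$. For $\epsilon\in\mathbb{R}$ put $$\tilde P=P+\epsilon\Big(T^{ij}-\frac{\eta_{ij}}{\eta_{i'j'}}T^{i'j'}\Big).$$ Then $1-\mathrm{tr}(\Xi P\Xi P^\top)=1-\mathrm{tr}(\Xi\tilde P\Xi\tilde P^\top)+O(\epsilon^2)$ as $\epsilon\to0$.
   Context: An $n\times n$ checkerboard copula is a real $n\times n$ matrix with nonnegative entries whose row and column sums all equal $\frac1n$. $\Xi=(\xi_{kl})$ with $\xi_{kl}=1$ if $k=l$, $2$ if $k>l$, $0$ if $k<l$. For $a,b\in\{1,\dots,n-1\}$, $T^{ab}=\mathbf{e}_a\mathbf{e}_b^\top+\mathbf{e}_{a+1}\mathbf{e}_{b+1}^\top-\mathbf{e}_a\mathbf{e}_{b+1}^\top-\mathbf{e}_{a+1}\mathbf{e}_b^\top$, where $\mathbf{e}_k$ is the $k$-th standard unit column vector of $\mathbb{R}^n$. *)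

From HB Require Import structures.
From mathcomp Require Import all_boot all_order all_algebra.
Set Implicit Arguments. Unset Strict Implicit. Unset Printing Implicit Defensive.
Import Order.TTheory GRing.Theory Num.Theory.
Local Open Scope ring_scope.

(* Indices are 0-based ordinals: paper index a in {1..n-1} is i : 'I_n with i.+1 < n;
   paper index a+1 is (nxt i). *)

(* successor index a+1 (used only when a.+1 < n; defaults to a otherwise) *)
Definition nxt (n : nat) (a : 'I_n) : 'I_n := insubd a a.+1.

Definition checkerboard_copula (R : realFieldType) (n : nat) (P : 'M[R]_n) : Prop :=
  (forall k l, 0 <= P k l) /\
  (forall k, \sum_(l < n) P k l = n%:R^-1) /\
  (forall l, \sum_(k < n) P k l = n%:R^-1).

Definition Xi (R : realFieldType) (n : nat) : 'M[R]_n :=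
  \matrix_(k < n, l < n) (if k == l then 1 else if (l < k)%N then 2 else 0).

Definition Tab (R : realFieldType) (n : nat) (a b : 'I_n) : 'M[R]_n :=
  delta_mx a b + delta_mx (nxt a) (nxt b)
  - delta_mx a (nxt b) - delta_mx (nxt a) b.

Definition etaP (R : realFieldType) (n : nat) (P : 'M[R]_n) (a b : 'I_n) : R :=
  P a b + P (nxt a) b + P a (nxt b) + P (nxt a) (nxt b).

From HB Require Import structures.
From mathcomp Require Import all_boot all_order all_algebra.
From mathcomp Require Import zify ring.
Import Order.TTheory GRing.Theory Num.Theory.
Set Implicit Arguments. Unset Strict Implicit.
Local Open Scope ring_scope.

(* For any M, N the matrix M T^{ab} N is the outer product of the column
   difference M e_a - M e_{a+1} with the row difference e_b^T N - e_{b+1}^T N.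
   For Xi these differences are e_a + e_{a+1} and -(e_b + e_{b+1})^T, and for Xi^T
   the signs are swapped, so Xi T^{ab} Xi = Xi^T T^{ab} Xi^T = -S^{ab} with
   S^{ab} = (e_a + e_{a+1})(e_b + e_{b+1})^T, and tr(S^{ab} P^T) = eta_ab.  Since the
   two cross terms of tr(Xi P~ Xi P~^T) are tr(Xi D Xi P^T) and, after transposing,
   tr(Xi^T D Xi^T P^T), the coefficient of eps is 2(-eta_ij + (eta_ij/eta_i'j') eta_i'j')
   = 0. *)

Lemma nxtE n (a : 'I_n) : (a.+1 < n)%N -> val (nxt a) = a.+1.
Proof. by move=> lt_a1n; rewrite /nxt val_insubd lt_a1n. Qed.

Section TraceIdentities.
Variables (R : comPzRingType) (n : nat).
Implicit Types (u v : 'cV[R]_n) (X M P D : 'M[R]_n).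

Lemma mxtrace_outer u v M : \tr (u *m v^T *m M) = (v^T *m M *m u) 0 0.
Proof. by rewrite -mulmxA mxtrace_mulC trace_mx11. Qed.

Lemma mxtrace_sandwich_shift X P D (e : R) :
  \tr (X *m (P + e *: D) *m X *m (P + e *: D)^T)
  = \tr (X *m P *m X *m P^T)
    + e * (\tr (X *m D *m X *m P^T) + \tr (X^T *m D *m X^T *m P^T))
    + e ^+ 2 * \tr (X *m D *m X *m D^T).
Proof.
have swap : \tr (X *m P *m X *m D^T) = \tr (X^T *m D *m X^T *m P^T).
  by rewrite -[LHS]mxtrace_tr !trmx_mul trmxK !mulmxA mxtrace_mulC !mulmxA.
rewrite [(P + _)^T]linearD /= [(e *: D)^T]linearZ /= !mulmxDr !mulmxDl -!scalemxAr -!scalemxAl.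
by rewrite !mxtraceD !mxtraceZ swap; ring.
Qed.

End TraceIdentities.

Section XiTab.
Variables (R : realFieldType) (n : nat).
Implicit Types (a b : 'I_n) (M N : 'M[R]_n).

Lemma Tab_outer a b :
  Tab R a b = (delta_mx a 0 - delta_mx (nxt a) 0) *m ('e_b - 'e_(nxt b) : 'rV_n).
Proof.
rewrite mulmxBl !mulmxBr !mul_delta_mx /Tab opprB !addrA.
by congr (_ - _); rewrite addrAC.
Qed.

Lemma mulmx_Tab M N a b :
  M *m Tab R a b *m N = (col a M - col (nxt a) M) *m (row b N - row (nxt b) N).
Proof.
by rewrite Tab_outer !colE !rowE -mulmxBr -mulmxBl !mulmxA.
Qed.

Definition pair_cV a : 'cV[R]_n := delta_mx a 0 + delta_mx (nxt a) 0.

Lemma etaP_pair_cV M a b : etaP M a b = \tr (pair_cV a *m (pair_cV b)^T *m M^T).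
Proof.
rewrite mxtrace_outer [(_ + _)^T]linearD /= !trmx_delta mulmxDl !mulmxDr -!rowE -!colE.
by rewrite !mxE /etaP; ring.
Qed.

Lemma Xi_col_diff a : (a.+1 < n)%N ->
  col a (Xi R n) - col (nxt a) (Xi R n) = pair_cV a.
Proof.
move=> lt_a1n; apply/matrixP => k z.
rewrite !mxE ord1 !eqxx !andbT -!val_eqE /= nxtE //.
move: (nat_of_ord k) (nat_of_ord a) => x y.
by case: (x =P y); case: (ltnP y x); case: (x =P y.+1); case: (ltnP y.+1 x) => *;
  try lia; rewrite /= ?mulr1n ?mulr0n; ring.
Qed.

Lemma Xi_row_diff b : (b.+1 < n)%N ->
  row b (Xi R n) - row (nxt b) (Xi R n) = - (pair_cV b)^T.
Proof.
move=> lt_b1n; apply/matrixP => z l.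
rewrite !mxE ord1 !eqxx !andbT -!val_eqE /= nxtE //.
move: (nat_of_ord l) (nat_of_ord b) => x y.
by case: (y =P x); case: (ltnP x y); case: (y.+1 =P x); case: (ltnP x y.+1);
  case: (x =P y); case: (x =P y.+1) => *; try lia; rewrite /= ?mulr1n ?mulr0n; ring.
Qed.

Lemma Xi_Tab_Xi a b : (a.+1 < n)%N -> (b.+1 < n)%N ->
  Xi R n *m Tab R a b *m Xi R n = - (pair_cV a *m (pair_cV b)^T).
Proof.
by move=> lt_a1n lt_b1n; rewrite mulmx_Tab Xi_col_diff // Xi_row_diff // mulmxN.
Qed.

Lemma trXi_Tab_trXi a b : (a.+1 < n)%N -> (b.+1 < n)%N ->
  (Xi R n)^T *m Tab R a b *m (Xi R n)^T = - (pair_cV a *m (pair_cV b)^T).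
Proof.
move=> lt_a1n lt_b1n; rewrite mulmx_Tab -!tr_row -!tr_col -!linearB /=.
by rewrite Xi_col_diff // Xi_row_diff // linearN /= trmxK mulNmx.
Qed.

End XiTab.

Theorem lemma3 (R : realFieldType) (n : nat) (P : 'M[R]_n) (i j i' j' : 'I_n) :
  (2 <= n)%N -> checkerboard_copula P ->
  (i.+1 < n)%N -> (j.+1 < n)%N -> (i'.+1 < n)%N -> (j'.+1 < n)%N ->
  etaP P i' j' != 0 ->
  let Pt := fun eps : R =>
    P + eps *: (Tab R i j - (etaP P i j / etaP P i' j') *: Tab R i' j') in
  exists C : R, exists2 d : R, 0 < d &
    forall eps : R, `|eps| < d ->
      `|(1 - \tr (Xi R n *m P *m Xi R n *m P^T))
        - (1 - \tr (Xi R n *m Pt eps *m Xi R n *m (Pt eps)^T))| <= C * eps ^+ 2.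
Proof.
move=> _ _ lt_i1n lt_j1n lt_i'1n lt_j'1n eta'_neq0 Pt.
set X := Xi R n; set c := etaP P i j / etaP P i' j'.
set D := Tab R i j - c *: Tab R i' j'.
set S := - (pair_cV R i *m (pair_cV R j)^T) + c *: (pair_cV R i' *m (pair_cV R j')^T).
have XDX : X *m D *m X = S.
  by rewrite mulmxBr mulmxBl -scalemxAr -scalemxAl !Xi_Tab_Xi // scalerN opprK.
have trXDtrX : X^T *m D *m X^T = S.
  by rewrite mulmxBr mulmxBl -scalemxAr -scalemxAl !trXi_Tab_trXi // scalerN opprK.
have trSP : \tr (S *m P^T) = 0.
  rewrite mulmxDl mxtraceD -scalemxAl mxtraceZ mulNmx linearN /= -!etaP_pair_cV.
  by rewrite /c mulfVK // addNr.
exists `|\tr (S *m D^T)|; exists 1 => // eps _.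
rewrite /Pt -/D mxtrace_sandwich_shift XDX trXDtrX trSP addr0 mulr0 addr0.
have -> : forall t s : R, 1 - t - (1 - (t + s)) = s by move=> t s; ring.
by rewrite normrM ger0_norm ?sqr_ge0 // mulrC.
Qed.
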